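(* Let $d\ge3$, $n_1,\dots,n_d,k$ positive integers, $\mathfrak{L}$ an invertible linear transform as in the context, $\tau>0$, $0<p<1$ and $w=(w_{i,j})$ nonnegative weights. Let $\boldsymbol{\mathcal{A}}=\boldsymbol{\mathcal{Q}}_1*_{\mathfrak{L}}\boldsymbol{\mathcal{B}}*_{\mathfrak{L}}\boldsymbol{\mathcal{Q}}_2^T\in\mathbb{R}^{n_1\times n_2\times n_3\times\cdots\times n_d}$, where $\boldsymbol{\mathcal{Q}}_1\in\mathbb{R}^{n_1\times k\times n_3\times\cdots\times n_d}$ and $\boldsymbol{\mathcal{Q}}_2\in\mathbb{R}^{n_2\times k\times n_3\times\cdots\times n_d}$ are partially orthogonal and $\boldsymbol{\mathcal{B}}\in\mathbb{R}^{k\times k\times n_3\times\cdots\times n_d}$. Then $$\boldsymbol{\mathcal{D}}_{\boldsymbol{\mathcal{W}},p,\tau}(\boldsymbol{\mathcal{A}})=\boldsymbol{\mathcal{Q}}_1*_{\mathfrak{L}}\boldsymbol{\mathcal{D}}_{\boldsymbol{\mathcal{W}},p,\tau}(\boldsymbol{\mathcal{B}})*_{\mathfrak{L}}\boldsymbol{\mathcal{Q}}_2^T.$$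
   Context: Transform: for $i=3,\dots,d$ let $\bm U_{n_i}\in\mathbb{C}^{n_i\times n_i}$ satisfy $\bm U_{n_i}\bm U_{n_i}^H=\bm U_{n_i}^H\bm U_{n_i}=\alpha_i\bm I_{n_i}$, $\alpha_i>0$. For a tensor $\boldsymbol{\mathcal{A}}$ of size $m_1\times m_2\times n_3\times\cdots\times n_d$, $\mathfrak{L}(\boldsymbol{\mathcal{A}})=\boldsymbol{\mathcal{A}}\times_3\bm U_{n_3}\cdots\times_d\bm U_{n_d}$ (mode-$k$ product $\boldsymbol{\mathcal{B}}=\boldsymbol{\mathcal{A}}\times_k\bm M$ iff $\bm B_{(k)}=\bm M\bm A_{(k)}$), with inverse $\mathfrak{L}^{-1}$. Frontal slices $\boldsymbol{\mathcal{A}}^{<j>}=\boldsymbol{\mathcal{A}}(:,:,i_3,\dots,i_d)$, $j=i_3+\sum_{a=4}^d(i_a-1)\prod_{b=3}^{a-1}n_b\in\{1,\dots,N\}$, $N=n_3\cdots n_d$. t-product: $\boldsymbol{\mathcal{C}}=\boldsymbol{\mathcal{A}}*_{\mathfrak{L}}\boldsymbol{\mathcal{B}}$ iff $\mathfrak{L}(\boldsymbol{\mathcal{C}})^{<j>}=\mathfrak{L}(\boldsymbol{\mathcal{A}})^{<j>}\mathfrak{L}(\boldsymbol{\mathcal{B}})^{<j>}$ for all $j$. Transpose: $\mathfrak{L}(\boldsymbol{\mathcal{A}}^T)^{<j>}=(\mathfrak{L}(\boldsymbol{\mathcal{A}})^{<j>})^H$. Identity tensor: $\mathfrak{L}(\boldsymbol{\mathcal{I}})^{<j>}=\bm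 I$ for all $j$. $\boldsymbol{\mathcal{Q}}$ is partially orthogonal if $\boldsymbol{\mathcal{Q}}^T*_{\mathfrak{L}}\boldsymbol{\mathcal{Q}}=\boldsymbol{\mathcal{I}}$, orthogonal if also $\boldsymbol{\mathcal{Q}}*_{\mathfrak{L}}\boldsymbol{\mathcal{Q}}^T=\boldsymbol{\mathcal{I}}$. f-diagonal: all frontal slices diagonal. T-SVD: $\boldsymbol{\mathcal{A}}=\boldsymbol{\mathcal{U}}*_{\mathfrak{L}}\boldsymbol{\mathcal{S}}*_{\mathfrak{L}}\boldsymbol{\mathcal{V}}^T$, $\boldsymbol{\mathcal{U}},\boldsymbol{\mathcal{V}}$ orthogonal, $\boldsymbol{\mathcal{S}}$ f-diagonal, obtained from slice-wise SVDs of $\mathfrak{L}(\boldsymbol{\mathcal{A}})^{<j>}$ with singular values in non-increasing order. GST: for $s\in\mathbb{R}$, $w\ge0$, $0<p<1$, $\delta=[2w(1-p)]^{\frac1{2-p}}+wp[2w(1-p)]^{\frac{p-1}{2-p}}$; $\mathrm{GST}(s,w,p)=0$ if $|s|\le\delta$, else $\mathrm{sign}(s)\hat\alpha^*$ with $\hat\alpha^*$ the largest positive root of $\alpha+wp\alpha^{p-1}=|s|$; $\mathrm{GST}(s,0,p)=s$. GTSVT: for a tensor $\boldsymbol{\mathcal{A}}$ of size $m_1\times m_2\times n_3\times\cdots\times n_d$ with T-SVD $\boldsymbol{\mathcal{U}}*_{\mathfrak{L}}\boldsymbol{\mathcal{S}}*_{\mathfrak{L}}\boldsymbol{\mathcal{V}}^T$,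 $\boldsymbol{\mathcal{D}}_{\boldsymbol{\mathcal{W}},p,\tau}(\boldsymbol{\mathcal{A}})=\boldsymbol{\mathcal{U}}*_{\mathfrak{L}}\mathfrak{L}^{-1}(\hat{\boldsymbol{\mathcal{S}}})*_{\mathfrak{L}}\boldsymbol{\mathcal{V}}^T$, where $\hat{\boldsymbol{\mathcal{S}}}$ is f-diagonal with $\hat{\boldsymbol{\mathcal{S}}}^{<j>}(i,i)=\mathrm{GST}\big(\mathfrak{L}(\boldsymbol{\mathcal{S}})^{<j>}(i,i),\tau w_{i,j},p\big)$ for $i\le\min(m_1,m_2)$; $\boldsymbol{\mathcal{W}}$ denotes the f-diagonal weight tensor with $\boldsymbol{\mathcal{W}}^{<j>}(i,i)=w_{i,j}$, the same weights being used regardless of the first two dimensions of the argument. *)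

From HB Require Import structures.
From mathcomp Require Import all_boot all_order all_algebra.
From mathcomp Require Import all_classical all_reals all_analysis.
From mathcomp Require Import complex.

Set Implicit Arguments.
Unset Strict Implicit.
Unset Printing Implicit Defensive.

Import Order.TTheory GRing.Theory Num.Theory.
Local Open Scope ring_scope.

Section GST.
Variable R : realType.

Definition gst_delta (w p : R) : R :=
  (2 * w * (1 - p)) `^ (1 / (2 - p))
  + w * p * (2 * w * (1 - p)) `^ ((p - 1) / (2 - p)).

Definition gst_root (s w p alpha : R) : Prop :=
  0 < alpha /\ alpha + w * p * alpha `^ (p - 1) = `|s|.

Definition gst_largest_root (s w p : R) : R :=
  xget 0 [set a | gst_root s w p a /\ (forall b, gst_root s w p b -> b <= a)].

Definition GST (s w p : R) : R :=
  if w == 0 then s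
  else if `|s| <= gst_delta w p then 0
  else Num.sg s * gst_largest_root s w p.

End GST.

(* Order-d tensors m1 x m2 x n_3 x ... x n_d, stored by frontal slices  *)
(* indexed by the (0-based) linear index                                *)
(*   j = i_3 + sum_{a=4}^d i_a prod_{b=3}^{a-1} n_b ,  0 <= i_a < n_a.  *)
Section Tensors.
Variable R : realType.
Local Notation C := (R[i]).
Variables (d : nat) (n : nat -> nat) (U : forall a : nat, 'M[C]_(n a)).

Definition NN : nat := \prod_(3 <= a < d.+1) n a.

Definition digit (a j : nat) : nat := (j %/ \prod_(3 <= b < a) n b) %% n a.

Definition mxnat (m : nat) (M : 'M[C]_m) (r c : nat) : C :=
  match (insub r : option 'I_m), (insub c : option 'I_m) with
  | Some r', Some c' => M r' c'
  | _, _ => 0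
  end.

Definition dgnat (m1 m2 : nat) (M : 'M[C]_(m1, m2)) (i : nat) : C :=
  match (insub i : option 'I_m1), (insub i : option 'I_m2) with
  | Some r, Some c => M r c
  | _, _ => 0
  end.

Definition tensor (m1 m2 : nat) := {ffun 'I_NN -> 'M[C]_(m1, m2)}.

(* kernel of the iterated mode products  x_3 M_3 ... x_d M_d  acting on
   the tube index:  (A x_3 M_3 ... x_d M_d)(:,:,j)
      = sum_j' (prod_a M_a(i_a(j), i_a(j'))) A(:,:,j')                 *)
Definition modeker (M : forall a : nat, 'M[C]_(n a)) (j j' : nat) : C :=
  \prod_(3 <= a < d.+1) mxnat (M a) (digit a j) (digit a j').

Definition modeprod (M : forall a : nat, 'M[C]_(n a)) (m1 m2 : nat)
    (A : tensor m1 m2) : tensor m1 m2 :=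
  [ffun j : 'I_NN => \sum_(j' < NN) modeker M j j' *: A j'].

Definition Lt (m1 m2 : nat) (A : tensor m1 m2) : tensor m1 m2 :=
  modeprod U A.
Definition Linv (m1 m2 : nat) (A : tensor m1 m2) : tensor m1 m2 :=
  modeprod (fun a => invmx (U a)) A.

Definition ctmx (m1 m2 : nat) (M : 'M[C]_(m1, m2)) : 'M[C]_(m2, m1) :=
  (map_mx (fun x : C => x^*) M)^T.

Definition tprod (m1 m2 m3 : nat) (A : tensor m1 m2) (B : tensor m2 m3)
  : tensor m1 m3 := Linv [ffun j => Lt A j *m Lt B j].

Definition ttr (m1 m2 : nat) (A : tensor m1 m2) : tensor m2 m1 :=
  Linv [ffun j => ctmx (Lt A j)].

Definition tid (m : nat) : tensor m m := Linv [ffun j => 1%:M].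

Definition partially_orthogonal (m k : nat) (Q : tensor m k) : Prop :=
  tprod (ttr Q) Q = tid k.

Definition orthogonal (m : nat) (Q : tensor m m) : Prop :=
  tprod (ttr Q) Q = tid m /\ tprod Q (ttr Q) = tid m.

Definition fdiagonal (m1 m2 : nat) (S : tensor m1 m2) : Prop :=
  forall (j : 'I_NN) (r : 'I_m1) (c : 'I_m2), (r : nat) != c -> S j r c = 0.

Definition real_tensor (m1 m2 : nat) (A : tensor m1 m2) : Prop :=
  forall j r c, A j r c \is Num.real.

Definition is_TSVD (m1 m2 : nat) (A : tensor m1 m2)
    (Ut : tensor m1 m1) (S : tensor m1 m2) (V : tensor m2 m2) : Prop :=
  [/\ orthogonal Ut /\ orthogonal V, fdiagonal S,
      (forall (j : 'I_NN) (i : nat), (i < minn m1 m2)%N ->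
          0 <= dgnat (Lt S j) i),
      (forall (j : 'I_NN) (i : nat), (i.+1 < minn m1 m2)%N ->
          dgnat (Lt S j) i.+1 <= dgnat (Lt S j) i)
    & A = tprod (tprod Ut S) (ttr V)].

(* hat S : f-diagonal, hat S^{<j>}(i,i) = GST(L(S)^{<j>}(i,i), tau w_{i,j}, p)
   (indices i, j are 0-based here) *)
Definition Shat (w : nat -> nat -> R) (p tau : R) (m1 m2 : nat)
    (S : tensor m1 m2) : tensor m1 m2 :=
  [ffun j : 'I_NN => \matrix_(r < m1, c < m2)
     if (r : nat) == c
     then (GST (complex.Re (Lt S j r c)) (tau * w r j) p)%:C%C
     else 0].

(* X is a value of the GTSVT operator D_{W,p,tau}(A), computed from some
   T-SVD of A (the T-SVD is not unique, so D is a relation). *)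
Definition GTSVT (w : nat -> nat -> R) (p tau : R) (m1 m2 : nat)
    (A X : tensor m1 m2) : Prop :=
  exists (Ut : tensor m1 m1) (S : tensor m1 m2) (V : tensor m2 m2),
    is_TSVD A Ut S V /\
    X = tprod (tprod Ut (Linv (Shat w p tau S))) (ttr V).

End Tensors.

From Pilot Require Import Defs.
From HB Require Import structures.
From mathcomp Require Import all_boot all_order all_algebra.
From mathcomp Require Import all_classical all_reals all_analysis.
From mathcomp Require Import complex zify.
Import Order.TTheory GRing.Theory Num.Theory.
Local Open Scope ring_scope.
Local Open Scope sesquilinear_scope.
Set Implicit Arguments.
Unset Strict Implicit.
Unset Printing Implicit Defensive.

(* The transform L turns t-products, transposes and the identity tensor into
   slice-wise matrix products, conjugate transposes and identities; L^-1 really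
   inverts L because the kernel of iterated mode products is a product over the
   mixed-radix digits of the slice index, hence composes like the U_a themselves.
   So the T-SVD and the operator D_{W,p,tau} both act independently on each
   frontal slice L(A)^<j>, and it suffices to argue for matrices.

   Let Q1^H Q1 = Q2^H Q2 = I.  If B = W1 S W2^H is an SVD, completing the
   isometries Q1 W1 and Q2 W2 to unitary matrices gives an SVD of Q1 B Q2^H with
   the same singular values, so thresholding them commutes with X |-> Q1 X Q2^H.
   Conversely, if U S V^H is an SVD of Q1 B Q2^H with r nonzero singular values,
   the first r columns of U and V lie in the ranges of Q1 and Q2; pulling them
   back by Q1^H and Q2^H and completing gives an SVD of B that yields the same
   thresholded matrix. *)

Section MixedRadix.
Variable n : nat -> nat.

Definition place_value (b : nat) : nat := (\prod_(3 <= c < b) n c)%N.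

Lemma place_valueS b : (3 <= b)%N -> place_value b.+1 = (n b * place_value b)%N.
Proof. by move=> b_ge3; rewrite /place_value big_nat_recr // mulnC. Qed.

Lemma place_value_le3 b : (b <= 3)%N -> place_value b = 1%N.
Proof. by move=> b_le3; rewrite /place_value big_geq. Qed.

Lemma digitMDl a b q r : (3 <= a < b)%N ->
  digit n a (r + q * place_value b) = digit n a r.
Proof.
case/andP=> a_ge3 lt_ab; rewrite /digit -/(place_value a).
have [->|Pa_gt0] := posnP (place_value a); first by rewrite !divn0.
have -> : (q * place_value b
            = q * \prod_(a.+1 <= c < b) n c * n a * place_value a)%N.
  by rewrite /place_value (big_cat_nat a_ge3 (ltnW lt_ab)) (big_ltn lt_ab) /=; lia.
by rewrite divnDMl // addnC modnMDl.
Qed.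

Lemma digit_lead b q r : (r < place_value b)%N -> (q < n b)%N ->
  digit n b (r + q * place_value b) = q.
Proof.
move=> lt_r lt_q; rewrite /digit -/(place_value b) divnDMl; last by lia.
by rewrite divn_small // modn_small.
Qed.

Lemma digit_decomp b j : (3 <= b)%N -> (j < place_value b.+1)%N ->
  j = (j %% place_value b + digit n b j * place_value b)%N.
Proof.
move=> b_ge3; rewrite place_valueS // => lt_j.
rewrite /digit -/(place_value b) (modn_small (m := j %/ _)).
  by rewrite addnC -divn_eq.
by rewrite ltn_divLR; lia.
Qed.

Lemma sum_digits (R : comPzSemiRingType) b (F : nat -> nat -> R) :
  \sum_(0 <= j < place_value b) \prod_(3 <= a < b) F a (digit n a j)
  = \prod_(3 <= a < b) \sum_(0 <= t < n a) F a t.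
Proof.
elim: b => [|b IHb]; first by rewrite place_value_le3 // big_nat1 !big_geq.
have [b_le2 | b_ge3] := leqP b 2.
  by rewrite place_value_le3 // big_nat1 !big_geq.
rewrite place_valueS // big_nat_mul big_nat_recr //= -IHb mulr_sumr.
apply: eq_big_nat => q /andP[_ lt_q].
rewrite -{1}[(q * _)%N]add0n big_addn mulSn addnK mulr_suml.
apply: eq_big_nat => r /andP[_ lt_r].
rewrite big_nat_recr //= digit_lead //; congr (_ * _).
by apply: eq_big_nat => a lt_a; rewrite digitMDl.
Qed.

Lemma place_value_expansion b j : (j < place_value b)%N ->
  j = (\sum_(3 <= a < b) digit n a j * place_value a)%N.
Proof.
elim: b j => [|b IHb] j lt_j.
  by move: lt_j; rewrite place_value_le3 // big_geq //; lia.
have [b_le2 | b_ge3] := leqP b 2.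
  by move: lt_j; rewrite place_value_le3 // big_geq //; lia.
have lt_jmod : (j %% place_value b < place_value b)%N.
  by rewrite ltn_mod; move: lt_j; rewrite place_valueS //; lia.
rewrite big_nat_recr //= {1}(digit_decomp b_ge3 lt_j) {1}(IHb _ lt_jmod).
congr (_ + _)%N; apply: eq_big_nat => a lt_a; congr (_ * _)%N.
by rewrite {2}(digit_decomp b_ge3 lt_j) digitMDl.
Qed.

Lemma digit_inj b j j' : (j < place_value b)%N -> (j' < place_value b)%N ->
  (forall a, (3 <= a < b)%N -> digit n a j = digit n a j') -> j = j'.
Proof.
move=> lt_j lt_j' eq_digits.
rewrite (place_value_expansion lt_j) (place_value_expansion lt_j').
by apply: eq_big_nat => a /eq_digits ->.
Qed.

End MixedRadix.

Section ModeProduct.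
Variable R : realType.
Local Notation C := R[i].
Variables (d : nat) (n : nat -> nat).
Hypothesis n_gt0 : forall a, (3 <= a <= d)%N -> (0 < n a)%N.

Lemma mxnatE m (A : 'M[C]_m) (x y : 'I_m) : mxnat A x y = A x y.
Proof. by rewrite /mxnat !valK. Qed.

Lemma mxnat_mul m (A B : 'M[C]_m) x y : (x < m)%N -> (y < m)%N ->
  \sum_(0 <= t < m) mxnat A x t * mxnat B t y = mxnat (A *m B) x y.
Proof.
move=> lt_x lt_y; rewrite -[x]/(Ordinal lt_x : nat) -[y]/(Ordinal lt_y : nat).
by rewrite big_mkord mxnatE mxE; apply: eq_bigr => t _; rewrite !mxnatE.
Qed.

Lemma mxnat1 m x y : (x < m)%N -> (y < m)%N ->
  mxnat (1%:M : 'M[C]_m) x y = (x == y)%:R.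
Proof.
move=> lt_x lt_y; rewrite -[x]/(Ordinal lt_x : nat) -[y]/(Ordinal lt_y : nat).
by rewrite mxnatE mxE.
Qed.

Lemma digit_lt a j : (3 <= a < d.+1)%N -> (digit n a j < n a)%N.
Proof. by move=> a_bnd; rewrite ltn_mod n_gt0. Qed.

Lemma modeker_mul (M N : forall a, 'M[C]_(n a)) (j j'' : 'I_(NN d n)) :
  \sum_(j' < NN d n) modeker d M j j' * modeker d N j' j''
  = modeker d (fun a => M a *m N a) j j''.
Proof.
transitivity (\sum_(0 <= j' < NN d n) modeker d M j j' * modeker d N j' j'').
  by rewrite big_mkord.
under eq_bigr do rewrite -big_split /=.
rewrite (sum_digits n d.+1 (fun a t =>
  mxnat (M a) (digit n a j) t * mxnat (N a) t (digit n a j''))).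
by apply: eq_big_nat => a a_bnd; rewrite mxnat_mul ?digit_lt.
Qed.

Lemma modeker1 (j j'' : 'I_(NN d n)) :
  modeker d (fun a => 1%:M : 'M[C]_(n a)) j j'' = (j == j'')%:R.
Proof.
rewrite /modeker; under eq_big_nat => a a_bnd do rewrite mxnat1 ?digit_lt //.
have -> : forall s, \prod_(a <- s) ((digit n a j == digit n a j'')%:R : C)
                    = (all (fun a => digit n a j == digit n a j'') s)%:R.
  by elim=> [|a s IHs]; rewrite ?big_nil // big_cons IHs -natrM mulnb.
suff -> : all (fun a => digit n a j == digit n a j'') (index_iota 3 d.+1)
          = (j == j'') by [].
apply/allP/eqP => [eq_digits|-> //].
apply/val_inj/(digit_inj (ltn_ord j) (ltn_ord j'')) => a a_bnd.
by apply/eqP/eq_digits; rewrite mem_index_iota.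
Qed.

Lemma modeprodA (M N : forall a, 'M[C]_(n a)) m1 m2 (A : tensor R d n m1 m2) :
  modeprod M (modeprod N A) = modeprod (fun a => M a *m N a) A.
Proof.
apply/ffunP => j; rewrite !ffunE.
under eq_bigr do rewrite ffunE scaler_sumr.
rewrite exchange_big /=; apply: eq_bigr => j'' _.
by rewrite -modeker_mul scaler_suml; under eq_bigr do rewrite scalerA.
Qed.

Lemma eq_modeprod (M N : forall a, 'M[C]_(n a)) m1 m2 (A : tensor R d n m1 m2) :
  (forall a, (3 <= a <= d)%N -> M a = N a) -> modeprod M A = modeprod N A.
Proof.
move=> eq_MN; apply/ffunP => j; rewrite !ffunE; apply: eq_bigr => j' _.
by congr (_ *: _); apply: eq_big_nat => a a_bnd; rewrite eq_MN.
Qed.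

Lemma modeprod1 m1 m2 (A : tensor R d n m1 m2) :
  modeprod (fun a => 1%:M : 'M[C]_(n a)) A = A.
Proof.
apply/ffunP => j; rewrite ffunE (bigD1 j) //= modeker1 eqxx scale1r big1 ?addr0 //.
by move=> j'' /negbTE; rewrite modeker1 eq_sym => ->; rewrite scale0r.
Qed.

Lemma modeprodK (M N : forall a, 'M[C]_(n a)) m1 m2 :
  (forall a, (3 <= a <= d)%N -> M a *m N a = 1%:M) ->
  cancel (@modeprod R d n N m1 m2) (@modeprod R d n M m1 m2).
Proof. by move=> MN1 A; rewrite modeprodA (eq_modeprod _ MN1) modeprod1. Qed.

Lemma modeprod_diag (M : forall a, 'M[C]_(n a)) m1 m2 (A : tensor R d n m1 m2) :
  (forall j, is_diag_mx (A j)) -> forall j, is_diag_mx (modeprod M A j).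
Proof.
move=> A_diag j; apply/is_diag_mxP => r c neq_rc.
rewrite ffunE summxE big1 // => j' _.
by rewrite mxE (is_diag_mxP (A_diag j')) // mulr0.
Qed.

End ModeProduct.

Section Unitary.
Variable C : numClosedFieldType.

Lemma trmxC_mul m n p (A : 'M[C]_(m, n)) (B : 'M[C]_(n, p)) :
  (A *m B)^t* = B^t* *m A^t*.
Proof. by rewrite trmx_mul map_mxM. Qed.

Lemma trmxC_pid m n r : (pid_mx r : 'M[C]_(m, n))^t* = pid_mx r.
Proof. by rewrite tr_pid_mx map_pid_mx. Qed.

Lemma unitarymx_trmxC_mul n (W : 'M[C]_n) : W \is unitarymx -> W^t* *m W = 1%:M.
Proof. by move=> Wu; rewrite -[W^t*]mul1mx mulmxKtV. Qed.

Lemma unitmx_trmxC_mul_scalar n (M : 'M[C]_n) c :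
  c != 0 -> M^t* *m M = c%:M -> M \in unitmx.
Proof.
move=> c_neq0 MtM; suff /mulmx1_unit[] : (c^-1 *: M^t*) *m M = 1%:M by [].
by rewrite -scalemxAl MtM scale_scalar_mx mulVf.
Qed.

Lemma pid_unitarymx r n : (r <= n)%N -> (pid_mx r : 'M[C]_(r, n)) \is unitarymx.
Proof.
move=> le_rn; apply/unitarymxP.
by rewrite trmxC_pid mul_pid_mx !minnn (minn_idPr le_rn) pid_mx_1.
Qed.

Lemma trmxC_unitary_pid n r (W : 'M[C]_n) : W \is unitarymx -> (r <= n)%N ->
  (W *m (pid_mx r : 'M[C]_(n, r)))^t* \is unitarymx.
Proof.
move=> Wu le_rn.
by rewrite trmxC_mul trmxC_pid mul_unitarymx ?pid_unitarymx ?trmxC_unitary.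
Qed.

Lemma trmxC_unitary_mull m n p (Q : 'M[C]_(m, n)) (P : 'M[C]_(n, p)) :
  Q^t* \is unitarymx -> ((Q *m P)^t* \is unitarymx) = (P^t* \is unitarymx).
Proof.
move=> /unitarymxP; rewrite trmxCK => QtQ.
by rewrite !qualifE !trmxCK trmxC_mul mulmxA -(mulmxA (P^t*)) QtQ mulmx1.
Qed.

Lemma isometry_sandwich_inj m1 m2 k1 k2
    (Q1 : 'M[C]_(m1, k1)) (Q2 : 'M[C]_(m2, k2)) X Y :
  Q1^t* \is unitarymx -> Q2^t* \is unitarymx ->
  Q1 *m X *m Q2^t* = Q1 *m Y *m Q2^t* -> X = Y.
Proof.
move=> /unitarymxP + /unitarymxP; rewrite !trmxCK => Q1tQ1 Q2tQ2.
move/(congr1 (fun Z => Q1^t* *m Z *m Q2)); rewrite !mulmxA Q1tQ1 !mul1mx.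
by rewrite -!mulmxA Q2tQ2 !mulmx1.
Qed.

Lemma unitarymx_complete m n (V : 'M[C]_(m, n)) : V \is unitarymx ->
  exists2 W : 'M[C]_n, W \is unitarymx & pid_mx m *m W = V.
Proof.
move=> Vu.
suff: exists q (W : 'M[C]_(m + q, n)),
    [/\ (m + q)%N = n, W \is unitarymx & pid_mx m *m W = V].
  by case=> q [W [eq_n Wu WV]]; subst n; exists W.
(* The second block of [schmidt_complete V] is an orthonormal basis of the
   orthogonal complement of the row space of V. *)
have /unitarymxP := schmidt_complete_unitarymx V.
rewrite -[schmidt_complete V]vsubmxK tr_col_mx map_row_mx mul_col_row.
rewrite scalar_mx_block => /eq_block_mx[_ ud _ dd].
have [Y defV] : exists Y, V = Y *m usubmx (schmidt_complete V).
  apply/submxP; rewrite /schmidt_complete col_mxKu.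
  by rewrite eqmx_schmidt_free ?row_base_free // eq_row_base.
have VD : V *m (dsubmx (schmidt_complete V))^t* = 0.
  move/(congr1 (fun Z => Z *m (dsubmx (schmidt_complete V))^t*)): defV => ->.
  by rewrite -mulmxA ud mulmx0.
exists _, (col_mx V (dsubmx (schmidt_complete V))); split.
- by have := add_rank_ortho V; rewrite (mxrank_unitary Vu).
- apply/unitarymxP; rewrite tr_col_mx map_row_mx mul_col_row scalar_mx_block.
  by rewrite (unitarymxP Vu) dd VD -[_ *m V^t*]trmxCK trmxC_mul trmxCK VD trmx0 map_mx0.
- by rewrite pid_mx_row mul_row_col mul1mx mul0mx addr0.
Qed.

Lemma isometry_complete n m (P : 'M[C]_(n, m)) : P^t* \is unitarymx ->
  exists2 W : 'M[C]_n, W \is unitarymx & W *m pid_mx m = P.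
Proof.
case/unitarymx_complete=> W Wu WP; exists (W^t*); first by rewrite trmxC_unitary.
by rewrite -[P]trmxCK -WP trmxC_mul trmxC_pid.
Qed.

End Unitary.

Section RectDiag.
Variable C : numClosedFieldType.

Definition rdiag_mx m1 m2 r (f : nat -> C) : 'M[C]_(m1, m2) :=
  \matrix_(i, j) if (i == j :> nat) && (i < r)%N then f i else 0.

Definition map_diag m1 m2 (g : nat -> C -> C) (S : 'M[C]_(m1, m2)) : 'M[C]_(m1, m2) :=
  \matrix_(i, j) if i == j :> nat then g i (S i j) else 0.

Lemma eq_rdiag_mx m1 m2 r f g : (forall i, (i < r)%N -> f i = g i) ->
  rdiag_mx m1 m2 r f = rdiag_mx m1 m2 r g.
Proof.
move=> eq_fg; apply/matrixP => i j; rewrite !mxE.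
by case: ifP => // /andP[_ /eq_fg].
Qed.

Lemma rdiag_mx1 m1 m2 r : rdiag_mx m1 m2 r (fun=> 1) = pid_mx r.
Proof. by apply/matrixP => i j; rewrite !mxE; case: ifP. Qed.

Lemma mul_rdiag_mx m p q r f g : (r <= p)%N ->
  rdiag_mx m p r f *m rdiag_mx p q r g = rdiag_mx m q r (fun i => f i * g i).
Proof.
move=> le_rp; apply/matrixP => i j; rewrite !mxE.
have [lt_ir | le_ri] := ltnP i r; last first.
  by rewrite andbF big1 // => k _; rewrite mxE ltnNge le_ri andbF mul0r.
rewrite (bigD1 (Ordinal (leq_trans lt_ir le_rp))) //= big1 ?addr0 => [|k].
  by rewrite !mxE /= eqxx lt_ir andbT; case: eqP; rewrite ?mulr0.
by rewrite -val_eqE /= => neq_ki; rewrite mxE eq_sym (negbTE neq_ki) mul0r.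
Qed.

Lemma rdiag_mx_pid m1 m2 r f :
  rdiag_mx m1 m2 r f = pid_mx r *m rdiag_mx r r r f *m pid_mx r.
Proof.
rewrite -!rdiag_mx1 !mul_rdiag_mx //.
by apply: eq_rdiag_mx => i _; rewrite mul1r mulr1.
Qed.

Lemma trmxC_rdiag m1 m2 r f :
  (rdiag_mx m1 m2 r f)^t* = rdiag_mx m2 m1 r (fun i => (f i)^*).
Proof.
apply/matrixP => i j; rewrite !mxE (eq_sym (j : nat)).
have [eq_ij|_] := eqVneq (i : nat) j; last by rewrite conjC0.
by rewrite eq_ij; case: ifP; rewrite ?conjC0.
Qed.

Lemma map_diag_rdiag m1 m2 r f (g : nat -> C -> C) : (forall i, g i 0 = 0) ->
  map_diag g (rdiag_mx m1 m2 r f) = rdiag_mx m1 m2 r (fun i => g i (f i)).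
Proof.
move=> g0; apply/matrixP => i j; rewrite !mxE.
by case: eqP => //= _; case: ifP.
Qed.

Lemma mulmx_rdiag_pid m1 m2 n1 n2 r (W1 : 'M[C]_(n1, m1)) (W2 : 'M[C]_(n2, m2))
    (P1 : 'M[C]_(n1, r)) (P2 : 'M[C]_(n2, r)) f :
  W1 *m pid_mx r = P1 -> W2 *m pid_mx r = P2 ->
  W1 *m rdiag_mx m1 m2 r f *m W2^t* = P1 *m rdiag_mx r r r f *m P2^t*.
Proof.
by move=> <- <-; rewrite rdiag_mx_pid trmxC_mul trmxC_pid !mulmxA.
Qed.

End RectDiag.

Lemma nonincreasing_ge0 (T : numDomainType) (σ : nat -> T) :
  (forall i, 0 <= σ i.+1 <= σ i) -> forall i, 0 <= σ i.
Proof. by move=> σ_chain i; case/andP: (σ_chain i) => /le_trans; apply. Qed.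

Section SingularValues.
Variable R : realType.
Local Notation C := R[i].

Lemma dgnatE m1 m2 (S : 'M[C]_(m1, m2)) (i : 'I_m1) (j : 'I_m2) :
  (i : nat) = j -> dgnat S i = S i j.
Proof. by move=> eq_ij; rewrite /dgnat valK eq_ij valK. Qed.

Lemma dgnat_out m1 m2 (S : 'M[C]_(m1, m2)) i :
  ~~ ((i < m1) && (i < m2))%N -> dgnat S i = 0.
Proof.
rewrite /dgnat; case: insubP => [r lt_i1 _|//]; case: insubP => [c lt_i2 _|//].
by rewrite lt_i1 lt_i2.
Qed.

Lemma dgnat_rdiag m1 m2 r (f : nat -> C) i :
  dgnat (rdiag_mx m1 m2 r f) i = if [&& i < m1, i < m2 & i < r]%N then f i else 0.
Proof.
have [/andP[lt_i1 lt_i2] | out] := boolP ((i < m1) && (i < m2))%N.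
  by rewrite (@dgnatE _ _ _ (Ordinal lt_i1) (Ordinal lt_i2)) // mxE eqxx lt_i1 lt_i2.
by rewrite dgnat_out //; move: out; case: (i < m1)%N; case: (i < m2)%N.
Qed.

Lemma is_diag_rdiag m1 m2 r (S : 'M[C]_(m1, m2)) : is_diag_mx S ->
  (forall i, (r <= i)%N -> dgnat S i = 0) -> S = rdiag_mx m1 m2 r (dgnat S).
Proof.
move=> /is_diag_mxP S_diag S_r; apply/matrixP => i j; rewrite mxE.
have [eq_ij|neq_ij] := eqVneq (i : nat) j; last by rewrite S_diag.
by rewrite -(dgnatE S eq_ij); case: ltnP => // /S_r.
Qed.

Definition singular_diag m1 m2 (S : 'M[C]_(m1, m2)) : Prop :=
  is_diag_mx S /\ forall i, 0 <= dgnat S i.+1 <= dgnat S i.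

Lemma singular_diagE m1 m2 (S : 'M[C]_(m1, m2)) :
  singular_diag S <->
  [/\ is_diag_mx S, forall i, (i < minn m1 m2)%N -> 0 <= dgnat S i
    & forall i, (i.+1 < minn m1 m2)%N -> dgnat S i.+1 <= dgnat S i].
Proof.
have S_out i : (minn m1 m2 <= i)%N -> dgnat S i = 0.
  by move=> le_i; apply: dgnat_out; apply/negP => /andP[]; lia.
split=> [[S_diag S_chain] | [S_diag S_ge0 S_le]].
  by split=> // i _; [apply: nonincreasing_ge0 | case/andP: (S_chain i)].
have ge0 i : 0 <= dgnat S i by case: (ltnP i (minn m1 m2)) => [/S_ge0|/S_out ->].
split=> // i; rewrite ge0 /=.
by case: (ltnP i.+1 (minn m1 m2)) => [/S_le|/S_out ->].
Qed.

Lemma singular_diag_rdiag m1 m2 r (σ : nat -> C) :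
  (forall i, 0 <= σ i.+1 <= σ i) -> singular_diag (rdiag_mx m1 m2 r σ).
Proof.
move=> σ_chain; split.
  by apply/is_diag_mxP => i j neq_ij; rewrite mxE (negbTE neq_ij).
move=> i; rewrite !dgnat_rdiag; case: ifP => [lt_i1 | _].
  have -> : [&& i < m1, i < m2 & i < r]%N by move: lt_i1; lia.
  exact: σ_chain.
by case: ifP; rewrite !lexx ?nonincreasing_ge0.
Qed.

Lemma singular_diag_rank m1 m2 (S : 'M[C]_(m1, m2)) : singular_diag S ->
  exists r, [/\ (r <= minn m1 m2)%N, S = rdiag_mx m1 m2 r (dgnat S)
              & forall i, (i < r)%N -> dgnat S i != 0].
Proof.
move=> [S_diag S_chain].
have S_min : dgnat S (minn m1 m2) = 0 by apply: dgnat_out; apply/negP => /andP[]; lia.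
have S_noninc : {homo dgnat S : i j / (i <= j)%N >-> j <= i}.
  apply: homo_leq => [x | y x z le_yx le_zy | i]; first exact: lexx.
    exact: le_trans le_zy le_yx.
  by case/andP: (S_chain i).
have ex_zero : exists i, dgnat S i == 0 by exists (minn m1 m2); rewrite S_min.
case: (ex_minnP ex_zero) => r /eqP S_r0 r_min; exists r; split.
- by apply: r_min; rewrite S_min.
- apply: is_diag_rdiag => // i /S_noninc; rewrite S_r0 => le_i0.
  by apply/le_anti; rewrite le_i0 nonincreasing_ge0.
- by move=> i lt_ir; apply: contraTN lt_ir => /r_min; rewrite -leqNgt.
Qed.

Definition mxsvt m1 m2 (g : nat -> C -> C) (A X : 'M[C]_(m1, m2)) : Prop :=
  exists (W1 : 'M[C]_m1) (S : 'M[C]_(m1, m2)) (W2 : 'M[C]_m2),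
    [/\ W1 \is unitarymx, W2 \is unitarymx, singular_diag S,
        A = W1 *m S *m W2^t* & X = W1 *m map_diag g S *m W2^t*].

Lemma singular_vectors_range m1 m2 k (Q : 'M[C]_(m1, k)) (B : 'M[C]_(k, m2))
    (U : 'M[C]_m1) (V : 'M[C]_m2) r (σ : nat -> C) :
  Q^t* \is unitarymx -> V \is unitarymx -> (r <= m2)%N ->
  (forall i, (i < r)%N -> σ i != 0) ->
  Q *m B = U *m rdiag_mx m1 m2 r σ *m V^t* ->
  U *m pid_mx r = Q *m (Q^t* *m U *m pid_mx r) :> 'M[C]_(m1, r).
Proof.
move=> /unitarymxP + Vu le_r σ_nz QB; rewrite trmxCK => QtQ.
have UP : U *m pid_mx r
          = Q *m (B *m V *m pid_mx r *m rdiag_mx r r r (fun i => (σ i)^-1)).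
  rewrite !mulmxA QB mulmxKtV // -(rdiag_mx1 _ m1) -(rdiag_mx1 _ m2) -!mulmxA.
  rewrite !mul_rdiag_mx //.
  by congr (_ *m _); apply: eq_rdiag_mx => i /σ_nz σi_nz; rewrite mul1r mulfV.
by rewrite -mulmxA UP [Q^t* *m _]mulmxA QtQ mul1mx.
Qed.

Lemma mxsvt_isometry n1 n2 k (g : nat -> C -> C)
    (Q1 : 'M[C]_(n1, k)) (Q2 : 'M[C]_(n2, k)) (B X : 'M[C]_k) :
  (forall i, g i 0 = 0) -> Q1^t* \is unitarymx -> Q2^t* \is unitarymx ->
  mxsvt g B X -> mxsvt g (Q1 *m B *m Q2^t*) (Q1 *m X *m Q2^t*).
Proof.
move=> g0 Q1u Q2u [W1 [S [W2 [W1u W2u [S_diag S_chain] -> ->]]]].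
set σ := dgnat S in S_chain.
have S_rdiag : S = rdiag_mx k k k σ.
  apply: is_diag_rdiag => // i le_ki.
  by apply: dgnat_out; rewrite negb_and -leqNgt le_ki.
have [V1 V1u V1P] : exists2 V1 : 'M[C]_n1,
    V1 \is unitarymx & V1 *m pid_mx k = Q1 *m W1 :> 'M[C]_(n1, k).
  by apply: isometry_complete; rewrite (trmxC_unitary_mull _ Q1u) trmxC_unitary W1u.
have [V2 V2u V2P] : exists2 V2 : 'M[C]_n2,
    V2 \is unitarymx & V2 *m pid_mx k = Q2 *m W2 :> 'M[C]_(n2, k).
  by apply: isometry_complete; rewrite (trmxC_unitary_mull _ Q2u) trmxC_unitary W2u.
have transfer f : V1 *m rdiag_mx n1 n2 k f *m V2^t*
                  = Q1 *m (W1 *m rdiag_mx k k k f *m W2^t*) *m Q2^t*.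
  by rewrite (mulmx_rdiag_pid _ V1P V2P) trmxC_mul !mulmxA.
exists V1, (rdiag_mx n1 n2 k σ), V2; split.
- exact: V1u.
- exact: V2u.
- exact: singular_diag_rdiag.
- by rewrite transfer -S_rdiag.
- by rewrite S_rdiag !map_diag_rdiag // transfer.
Qed.

Lemma mxsvt_isometryV n1 n2 k (g : nat -> C -> C)
    (Q1 : 'M[C]_(n1, k)) (Q2 : 'M[C]_(n2, k)) (B : 'M[C]_k) (Y : 'M[C]_(n1, n2)) :
  (forall i, g i 0 = 0) -> Q1^t* \is unitarymx -> Q2^t* \is unitarymx ->
  mxsvt g (Q1 *m B *m Q2^t*) Y -> exists2 X, mxsvt g B X & Y = Q1 *m X *m Q2^t*.
Proof.
move=> g0 Q1u Q2u [U [S [V [Uu Vu S_sd defA ->]]]].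
have [r [le_r S_rdiag σ_nz]] := singular_diag_rank S_sd.
set σ := dgnat S in S_rdiag σ_nz.
have range1 : U *m pid_mx r = Q1 *m (Q1^t* *m U *m pid_mx r) :> 'M[C]_(n1, r).
  apply: (singular_vectors_range (B := B *m Q2^t*) Q1u Vu _ σ_nz).
    by move: le_r; lia.
  by rewrite mulmxA defA -S_rdiag.
have range2 : V *m pid_mx r = Q2 *m (Q2^t* *m V *m pid_mx r) :> 'M[C]_(n2, r).
  apply: (singular_vectors_range (B := B^t* *m Q1^t*) (σ := fun i => (σ i)^*) Q2u Uu).
  - by move: le_r; lia.
  - by move=> i /σ_nz; rewrite conjC_eq0.
  - rewrite mulmxA -(trmxCK Q2) -!trmxC_mul mulmxA defA S_rdiag.
    by rewrite !trmxC_mul trmxCK trmxC_rdiag mulmxA.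
have [W1 W1u W1P] : exists2 W1 : 'M[C]_k,
    W1 \is unitarymx & W1 *m pid_mx r = Q1^t* *m U *m pid_mx r :> 'M[C]_(k, r).
  apply: isometry_complete; rewrite -(trmxC_unitary_mull _ Q1u) -range1.
  by rewrite trmxC_unitary_pid //; move: le_r; lia.
have [W2 W2u W2P] : exists2 W2 : 'M[C]_k,
    W2 \is unitarymx & W2 *m pid_mx r = Q2^t* *m V *m pid_mx r :> 'M[C]_(k, r).
  apply: isometry_complete; rewrite -(trmxC_unitary_mull _ Q2u) -range2.
  by rewrite trmxC_unitary_pid //; move: le_r; lia.
have transfer f : U *m rdiag_mx n1 n2 r f *m V^t*
                  = Q1 *m (W1 *m rdiag_mx k k r f *m W2^t*) *m Q2^t*.
  rewrite (mulmx_rdiag_pid _ range1 range2) (mulmx_rdiag_pid _ W1P W2P).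
  by rewrite trmxC_mul !mulmxA.
exists (W1 *m map_diag g (rdiag_mx k k r σ) *m W2^t*).
  exists W1, (rdiag_mx k k r σ), W2; split => //.
    by apply: singular_diag_rdiag; case: S_sd.
  by apply: (isometry_sandwich_inj Q1u Q2u); rewrite -transfer -S_rdiag.
by rewrite S_rdiag !map_diag_rdiag // transfer.
Qed.

End SingularValues.

Lemma GST0 (R : realType) (w p : R) : 0 <= w -> 0 <= p -> GST 0 w p = 0.
Proof.
move=> w_ge0 p_ge0; rewrite /GST normr0; case: (w == 0) => //.
by rewrite ifT // addr_ge0 ?mulr_ge0 ?powR_ge0.
Qed.

Section Tensors.
Variable R : realType.
Local Notation C := R[i].
Variables (d : nat) (n : nat -> nat) (U : forall a : nat, 'M[C]_(n a)).
Hypothesis n_gt0 : forall a, (3 <= a <= d)%N -> (0 < n a)%N.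
Hypothesis U_unit : forall a, (3 <= a <= d)%N -> U a \in unitmx.

Lemma ctmxE m1 m2 (M : 'M[C]_(m1, m2)) : ctmx M = M^t*.
Proof. by rewrite /ctmx map_trmx. Qed.

Lemma LtK m1 m2 : cancel (@Linv R d n U m1 m2) (@Lt R d n U m1 m2).
Proof. by apply: modeprodK => // a /U_unit; apply: mulmxV. Qed.

Lemma LinvK m1 m2 : cancel (@Lt R d n U m1 m2) (@Linv R d n U m1 m2).
Proof. by apply: modeprodK => // a /U_unit; apply: mulVmx. Qed.

Lemma Lt_inj m1 m2 (A B : tensor R d n m1 m2) :
  (forall j, Lt U A j = Lt U B j) -> A = B.
Proof. by move=> eq_AB; rewrite -[A]LinvK -[B]LinvK; congr Linv; apply/ffunP. Qed.

Lemma Lt_Linv m1 m2 (F : 'I_(NN d n) -> 'M[C]_(m1, m2)) j :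
  Lt U (Linv U [ffun j => F j]) j = F j.
Proof. by rewrite LtK ffunE. Qed.

Lemma Lt_tprod m1 m2 m3 (A : tensor R d n m1 m2) (B : tensor R d n m2 m3) j :
  Lt U (tprod U A B) j = Lt U A j *m Lt U B j.
Proof. by rewrite /tprod LtK ffunE. Qed.

Lemma Lt_ttr m1 m2 (A : tensor R d n m1 m2) j : Lt U (ttr U A) j = (Lt U A j)^t*.
Proof. by rewrite /ttr LtK ffunE ctmxE. Qed.

Lemma Lt_tid m j : Lt U (tid d U m) j = 1%:M.
Proof. by rewrite /tid LtK ffunE. Qed.

Lemma Lt_tprod_ttr m1 m2 k (Q1 : tensor R d n m1 k) (Q2 : tensor R d n m2 k) X j :
  Lt U (tprod U (tprod U Q1 X) (ttr U Q2)) j = Lt U Q1 j *m Lt U X j *m (Lt U Q2 j)^t*.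
Proof. by rewrite !Lt_tprod Lt_ttr. Qed.

Lemma fdiagonalP m1 m2 (S : tensor R d n m1 m2) :
  fdiagonal S <-> forall j, is_diag_mx (Lt U S j).
Proof.
split=> [S_diag | LS_diag].
  by apply: modeprod_diag => j; apply/is_diag_mxP => r c; apply: S_diag.
by rewrite -[S]LinvK => j; apply/is_diag_mxP; apply: modeprod_diag.
Qed.

Lemma orthogonalP m (W : tensor R d n m m) :
  Defs.orthogonal U W <-> forall j, Lt U W j \is unitarymx.
Proof.
split=> [[_ WWt] j | Wu].
  apply/unitarymxP; have := congr1 (fun T => Lt U T j) WWt.
  by rewrite /= Lt_tprod Lt_ttr Lt_tid.
split; apply: Lt_inj => j; rewrite Lt_tprod Lt_ttr Lt_tid.
  exact: unitarymx_trmxC_mul.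
exact/unitarymxP.
Qed.

Lemma partially_orthogonalP m k (Q : tensor R d n m k) :
  partially_orthogonal U Q <-> forall j, (Lt U Q j)^t* \is unitarymx.
Proof.
rewrite /partially_orthogonal; split=> [QtQ j | Qu].
  apply/unitarymxP; rewrite trmxCK.
  by have := congr1 (fun T => Lt U T j) QtQ; rewrite /= Lt_tprod Lt_ttr Lt_tid.
by apply: Lt_inj => j; have /unitarymxP := Qu j; rewrite trmxCK Lt_tprod Lt_ttr Lt_tid.
Qed.

Lemma is_TSVDP m1 m2 (A : tensor R d n m1 m2) Ut S V :
  is_TSVD U A Ut S V <->
  forall j, [/\ Lt U Ut j \is unitarymx, Lt U V j \is unitarymx,
                singular_diag (Lt U S j)
              & Lt U A j = Lt U Ut j *m Lt U S j *m (Lt U V j)^t*].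
Proof.
split=> [[[/orthogonalP Uu /orthogonalP Vu] /fdiagonalP S_diag S_ge0 S_le ->] j
        | slices].
  split=> //; last by rewrite !Lt_tprod Lt_ttr.
  by apply/singular_diagE; split=> // i; [apply: S_ge0 | apply: S_le].
split.
- by split; apply/orthogonalP => j; case: (slices j).
- by apply/fdiagonalP => j; case: (slices j) => _ _ /singular_diagE[].
- by move=> j i; case: (slices j) => _ _ /singular_diagE[_ S_ge0 _] _; apply: S_ge0.
- by move=> j i; case: (slices j) => _ _ /singular_diagE[_ _ S_le] _; apply: S_le.
- by apply: Lt_inj => j; rewrite !Lt_tprod Lt_ttr; case: (slices j).
Qed.

Definition gst_shrink (w : nat -> nat -> R) (p tau : R) (j i : nat) (x : C) : C :=
  (GST (complex.Re x) (tau * w i j) p)%:C%C.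

Lemma gst_shrink0 w p tau j i : 0 <= tau -> (forall i j, 0 <= w i j) -> 0 <= p ->
  gst_shrink w p tau j i 0 = 0.
Proof.
move=> tau_ge0 w_ge0 p_ge0; have Re0 : complex.Re (0 : C) = 0 by [].
by rewrite /gst_shrink Re0 GST0 ?rmorph0 // mulr_ge0.
Qed.

Lemma Lt_Shat w p tau m1 m2 (S : tensor R d n m1 m2) j :
  Lt U (Linv U (Shat U w p tau S)) j = map_diag (gst_shrink w p tau j) (Lt U S j).
Proof. by rewrite LtK ffunE. Qed.

Lemma GTSVTP w p tau m1 m2 (A X : tensor R d n m1 m2) :
  GTSVT U w p tau A X <->
  forall j : 'I_(NN d n), mxsvt (gst_shrink w p tau j) (Lt U A j) (Lt U X j).
Proof.
split=> [[Ut [S [V [/is_TSVDP slices ->]]]] j | svt].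
  have [Uu Vu S_sd LA] := slices j; exists (Lt U Ut j), (Lt U S j), (Lt U V j).
  by split=> //; rewrite !Lt_tprod Lt_ttr Lt_Shat.
have /choice[F svtF] : forall j, exists T : 'M[C]_m1 * 'M[C]_(m1, m2) * 'M[C]_m2,
    [/\ T.1.1 \is unitarymx, T.2 \is unitarymx, singular_diag T.1.2,
        Lt U A j = T.1.1 *m T.1.2 *m T.2^t*
      & Lt U X j = T.1.1 *m map_diag (gst_shrink w p tau j) T.1.2 *m T.2^t*].
  by move=> j; have [W1 [S [W2 svtj]]] := svt j; exists (W1, S, W2).
exists (Linv U [ffun j => (F j).1.1]), (Linv U [ffun j => (F j).1.2]),
       (Linv U [ffun j => (F j).2]); split.
  by apply/is_TSVDP => j; rewrite !Lt_Linv; case: (svtF j).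
by apply: Lt_inj => j; rewrite !Lt_tprod Lt_ttr Lt_Shat !Lt_Linv; case: (svtF j).
Qed.

End Tensors.

Theorem proposition2 (R : realType) (d : nat) (n : nat -> nat)
    (U : forall a : nat, 'M[R[i]]_(n a)) (alpha : nat -> R)
    (n1 n2 k : nat) (tau p : R) (w : nat -> nat -> R)
    (Q1 : tensor R d n n1 k) (Q2 : tensor R d n n2 k) (B : tensor R d n k k) :
  (3 <= d)%N ->
  (forall a, (3 <= a <= d)%N -> (0 < n a)%N) ->
  (0 < n1)%N -> (0 < n2)%N -> (0 < k)%N ->
  (forall a, (3 <= a <= d)%N ->
     0 < alpha a /\
     U a *m ctmx (U a) = ((alpha a)%:C%C)%:M /\
     ctmx (U a) *m U a = ((alpha a)%:C%C)%:M) ->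
  0 < tau -> 0 < p < 1 ->
  (forall i j, 0 <= w i j) ->
  real_tensor Q1 -> real_tensor Q2 -> real_tensor B ->
  partially_orthogonal U Q1 -> partially_orthogonal U Q2 ->
  real_tensor (tprod U (tprod U Q1 B) (ttr U Q2)) ->
  (forall X : tensor R d n k k,
     GTSVT U w p tau B X ->
     GTSVT U w p tau (tprod U (tprod U Q1 B) (ttr U Q2))
                     (tprod U (tprod U Q1 X) (ttr U Q2)))
  /\
  (forall Y : tensor R d n n1 n2,
     GTSVT U w p tau (tprod U (tprod U Q1 B) (ttr U Q2)) Y ->
     exists X : tensor R d n k k,
       GTSVT U w p tau B X /\ Y = tprod U (tprod U Q1 X) (ttr U Q2)).
Proof.
move=> _ n_gt0 _ _ _ U_scaled tau_gt0 /andP[p_gt0 _] w_ge0 _ _ _ Q1_po Q2_po _.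
have U_unit a : (3 <= a <= d)%N -> U a \in unitmx.
  case/U_scaled=> alpha_gt0 [_]; rewrite ctmxE; apply: unitmx_trmxC_mul_scalar.
  by rewrite lt0r_neq0 // ltcR.
have svtP := GTSVTP n_gt0 U_unit w p tau.
have LtQXQ := Lt_tprod_ttr n_gt0 U_unit Q1 Q2.
have Q1u := (partially_orthogonalP n_gt0 U_unit Q1).1 Q1_po.
have Q2u := (partially_orthogonalP n_gt0 U_unit Q2).1 Q2_po.
have shrink0 j i := gst_shrink0 j i (ltW tau_gt0) w_ge0 (ltW p_gt0).
split=> [X /svtP svtX | Y /svtP svtY].
  apply/svtP => j; rewrite [T in mxsvt _ T _]LtQXQ [T in mxsvt _ _ T]LtQXQ.
  exact: mxsvt_isometry (shrink0 j) (Q1u j) (Q2u j) (svtX j).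
have /choice[X svtX] (j : 'I_(NN d n)) : exists Xj,
    mxsvt (gst_shrink w p tau j) (Lt U B j) Xj
    /\ Lt U Y j = Lt U Q1 j *m Xj *m (Lt U Q2 j)^t*.
  have := svtY j; rewrite [T in mxsvt _ T _]LtQXQ.
  by case/(mxsvt_isometryV (shrink0 j) (Q1u j) (Q2u j)) => Xj; exists Xj.
exists (Linv U [ffun j => X j]); split.
  by apply/svtP => j; rewrite (Lt_Linv n_gt0 U_unit); case: (svtX j).
apply: (Lt_inj n_gt0 U_unit) => j.
by rewrite [RHS]LtQXQ (Lt_Linv n_gt0 U_unit); case: (svtX j).
Qed.
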